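(* Let $\mathcal{C}$ be a Conway category and let $\mathbf{Q}$ be a finite automaton. If $\mathcal{C}$ satisfies the identity $\Gamma(\mathbf{Q})$ associated with $\mathbf{Q}$, then $\mathcal{C}$ satisfies the group identity $\Gamma(G)$ for every finite simple group $G$ that divides the monoid $M(\mathbf{Q})$.
   Context: Cartesian categories have chosen finite products (terminal object $T$, projections $\pi_i$, tupling $\langle\cdot\rangle$, $!_A:A\to T$, $f\times g$), strictly associative; composition is written $g\circ f$; $\Delta_{A^n}=\langle 1_A,\ldots,1_A\rangle:A\to A^n$. A dagger operation maps $f:A\times C\to A$ to $f^\dagger:C\to A$. A Conway category is a cartesian category with dagger satisfying: $(f\circ(1_A\times g))^\dagger=f^\dagger\circ g$ ($f:A\times B\to A$, $g:C\to B$); $f^{\dagger\dagger}=(f\circ(\Delta_{A^2}\times 1_C))^\dagger$ ($f:A\times A\times C\to A$); $(f\circ\langle g,\pi_2^{A\times C}\rangle)^\dagger=f\circ\langle (g\circ\langle f,\pi_2^{B\times C}\rangle)^\dagger,1_C\rangle$ ($f:B\times C\to A$, $g:A\times C\to B$). A finite automaton $\mathbf{Q}=(Q,Z,\cdot)$ has finite nonempty state set $Q$, finite nonempty input alphabet $Z$ and action $Q\times Z\to Q$, extended to words; $M(\mathbf{Q})$ is the monoid of functions $Q\to Q$, $q\mapsto qu$, induced by words $u\in Z^*$. Write $Q=\{q_1,\ldots,q_n\}$, identified with $\{1,\ldots,n\}$, and $Z=\{a_1,\ldots,a_m\}$. For an object $A$ and $i\in[n]$ let $\rho_i^{\mathbf{Q},A}=\langle\pi^{A^n}_{ia_1},\ldots,\pi^{A^n}_{ia_m}\rangle:A^n\to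 A^m$ (here $ia_j$ is the index of the state $q_i\cdot a_j$). For $f:A^m\times C\to A$ let $f^{\mathbf{Q},A}:A^n\times C\to A^n$ be the morphism with $\pi_i^{A^n}\circ f^{\mathbf{Q},A}=f\circ(\rho_i^{\mathbf{Q},A}\times 1_C)$ for all $i$. The identity $\Gamma(\mathbf{Q})$ holds in $\mathcal{C}$ if $(f^{\mathbf{Q},A})^\dagger=\Delta_{A^n}\circ(f\circ(\Delta_{A^m}\times 1_C))^\dagger$ for all objects $A,C$ and all $f:A^m\times C\to A$. For a finite group (or monoid) $G$, $\Gamma(G)$ is the identity $\Gamma$ of the automaton $(G,G,\cdot)$ whose action is multiplication. A group in a finite monoid $M$ is a subsemigroup of $M$ which is a group (its unit may be any idempotent); a finite group $G$ divides $M$ if it is a homomorphic image of a group in $M$. A finite group is simple if it is nontrivial and has no normal subgroups other than itself and the trivial one. *)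

From mathcomp Require Import all_boot all_fingroup all_solvable.
Set Implicit Arguments.
Unset Strict Implicit.
Unset Printing Implicit Defensive.

(* Hom-sets are types, equality of morphisms is Leibniz equality.      *)
(* Binary products are not strictly associative; iterated products are *)
(* always right-nested: A x B x C := A x (B x C).      *)
Record CartCat := {
  obj :> Type;
  hom : obj -> obj -> Type;
  idm : forall A, hom A A;
  comp : forall A B C, hom B C -> hom A B -> hom A C;
  term : obj;
  bang : forall A, hom A term;
  prod : obj -> obj -> obj;
  p1 : forall A B, hom (prod A B) A;
  p2 : forall A B, hom (prod A B) B;
  pair : forall A B X, hom X A -> hom X B -> hom X (prod A B);
  compA : forall A B C D (h : hom C D) (g : hom B C) (f : hom A B),
      comp h (comp g f) = comp (comp h g) f;
  comp1m : forall A B (f : hom A B), comp (idm B) f = f;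
  compm1 : forall A B (f : hom A B), comp f (idm A) = f;
  bang_uniq : forall A (f : hom A term), f = bang A;
  p1_pair : forall A B X (f : hom X A) (g : hom X B), comp (p1 A B) (pair f g) = f;
  p2_pair : forall A B X (f : hom X A) (g : hom X B), comp (p2 A B) (pair f g) = g;
  pair_uniq : forall A B X (h : hom X (prod A B)),
      pair (comp (p1 A B) h) (comp (p2 A B) h) = h
}.

Arguments hom {c} _ _.
Arguments idm {c} A.
Arguments comp {c A B C} _ _.
Arguments term {c}.
Arguments bang {c} A.
Arguments prod {c} _ _.
Arguments p1 {c} A B.
Arguments p2 {c} A B.
Arguments pair {c A B X} _ _.

Lemma ord_0_False : 'I_0 -> False.
Proof. by case. Qed.

Section CartOps.
Variable K : CartCat.

Definition pmap (A B A' B' : K) (f : hom A A') (g : hom B B') :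
    hom (prod A B) (prod A' B') :=
  pair (comp f (p1 A B)) (comp g (p2 A B)).

Variable A : K.

Fixpoint pow (n : nat) : K :=
  match n with
  | 0 => term
  | S k => match k with 0 => A | S _ => prod A (pow k) end
  end.

Fixpoint projn (n : nat) : 'I_n -> hom (pow n) A :=
  match n return 'I_n -> hom (pow n) A with
  | 0 => fun i => False_rect _ (ord_0_False i)
  | S k => fun i =>
     (match k as k0 return ('I_k0 -> hom (pow k0) A) -> 'I_k0.+1 -> hom (pow k0.+1) A with
      | 0 => fun _ _ => idm A
      | S j => fun r i =>
          match unlift ord0 i with
          | None => p1 A (pow j.+1)
          | Some i' => comp (r i') (p2 A (pow j.+1))
          end
      end) (@projn k) i
  end.

Fixpoint tuplen (X : K) (n : nat) : ('I_n -> hom X A) -> hom X (pow n) :=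
  match n return ('I_n -> hom X A) -> hom X (pow n) with
  | 0 => fun _ => bang X
  | S k => fun fs =>
     (match k as k0 return (('I_k0 -> hom X A) -> hom X (pow k0)) ->
                           ('I_k0.+1 -> hom X A) -> hom X (pow k0.+1) with
      | 0 => fun _ fs => fs ord0
      | S j => fun r fs => pair (fs ord0) (r (fun i => fs (lift ord0 i)))
      end) (@tuplen X k) fs
  end.

Definition diag (n : nat) : hom A (pow n) := @tuplen A n (fun _ => idm A).

End CartOps.

Record ConwayCat := {
  ccat :> CartCat;
  dagger : forall (A C : ccat), hom (prod A C) A -> hom C A;
  dagger_param : forall (A B C : ccat) (f : hom (prod A B) A) (g : hom C B),
      dagger (comp f (pmap (idm A) g)) = comp (dagger f) g;
  (* double dagger identity; A x A x C = A x (A x C),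
     Delta_{A^2} x 1_C becomes <pi_1, <pi_1, pi_2>> : A x C -> A x (A x C) *)
  dagger_double : forall (A C : ccat) (f : hom (prod A (prod A C)) A),
      dagger (dagger f) =
      dagger (comp f (pair (p1 A C) (pair (p1 A C) (p2 A C))));
  dagger_comp : forall (A B C : ccat) (f : hom (prod B C) A) (g : hom (prod A C) B),
      dagger (comp f (pair g (p2 A C))) =
      comp f (pair (dagger (comp g (pair f (p2 B C)))) (idm C))
}.

Arguments dagger {c A C} _.

Record automaton := Automaton {
  state : finType;
  input : finType;
  act : state -> input -> state
}.

(* the identity Gamma(Q); states q_1..q_n and inputs a_1..a_m are
   enumerated by the canonical enumerations of the finite types *)
Section Gamma.
Variables (K : ConwayCat) (Q : automaton).

Definition nQ := #|state Q|.
Definition mQ := #|input Q|.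

Definition st_of (i : 'I_nQ) : state Q := enum_val i.
Definition in_of (j : 'I_mQ) : input Q := enum_val j.
Definition st_idx (q : state Q) : 'I_nQ := enum_rank q.

Definition rho (A : K) (i : 'I_nQ) : hom (pow A nQ) (pow A mQ) :=
  @tuplen K A (pow A nQ) mQ
    (fun j : 'I_mQ => @projn K A nQ (st_idx (act (st_of i) (in_of j)))).

Definition fQ (A C : K) (f : hom (prod (pow A mQ) C) A) :
    hom (prod (pow A nQ) C) (pow A nQ) :=
  @tuplen K A (prod (pow A nQ) C) nQ (fun i : 'I_nQ => comp f (pmap (rho A i) (idm C))).

Definition Gamma : Prop :=
  forall (A C : K) (f : hom (prod (pow A mQ) C) A),
    dagger (fQ f) = comp (@diag K A nQ) (dagger (comp f (pmap (@diag K A mQ) (idm C)))).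
End Gamma.

Section Monoid.
Variable Q : automaton.

Definition word_fun (u : seq (input Q)) : {ffun state Q -> state Q} :=
  [ffun q => foldl (@act Q) q u].

Definition inM (f : {ffun state Q -> state Q}) : Prop :=
  exists u : seq (input Q), f = word_fun u.

(* product in M(Q): f_u * f_v = f_{uv}, i.e. first f then g *)
Definition mulT (f g : {ffun state Q -> state Q}) : {ffun state Q -> state Q} :=
  [ffun q => g (f q)].

Definition group_in_M (H : {set {ffun state Q -> state Q}})
    (e : {ffun state Q -> state Q}) : Prop :=
  [/\ forall x, x \in H -> inM x,
      e \in H,
      forall x y, x \in H -> y \in H -> mulT x y \in H,
      forall x, x \in H -> mulT e x = x /\ mulT x e = x
    & forall x, x \in H -> exists2 y, y \in H & mulT x y = e /\ mulT y x = e].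

Definition divides_M (G : finGroupType) : Prop :=
  exists (H : {set {ffun state Q -> state Q}}) (e : {ffun state Q -> state Q})
         (phi : {ffun state Q -> state Q} -> G),
    [/\ group_in_M H e,
        forall x y, x \in H -> y \in H -> phi (mulT x y) = (phi x * phi y)%g
      & forall g : G, exists2 x, x \in H & phi x = g].
End Monoid.

Definition group_automaton (G : finGroupType) : automaton :=
  @Automaton G G (fun x y => (x * y)%g).

(* Gamma(Q) is inherited by subautomata (with relabelled inputs), by products
   of automata over the same inputs, and by the automaton whose inputs act as
   nonempty words over Q; for the last one, intermediate variables for the
   positions inside the words are eliminated by means of Bekic's identity.
   A group H in M(Q) acts faithfully on Q^n, n = #|state Q|, by nonempty
   words, so Gamma holds for the automaton (H, H, .). A surjective morphism
   phi : H -> G then transports Gamma: Gamma(H) at the object A^G, after the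
   change of coordinates (x, g) |-> (x, g * phi x), is Gamma(G). *)

From Pilot Require Import Defs.
From mathcomp Require Import all_boot all_fingroup all_solvable.
Import Pilot.Defs.
Set Implicit Arguments.
Unset Strict Implicit.
Unset Printing Implicit Defensive.

Local Notation "f ⊙ g" := (comp f g) (at level 40, left associativity).

Section Cartesian.
Variable K : CartCat.

Lemma pair_comp (A B X Y : K) (f : hom X A) (g : hom X B) (h : hom Y X) :
  pair f g ⊙ h = pair (f ⊙ h) (g ⊙ h).
Proof. by rewrite -{1}(pair_uniq (pair f g ⊙ h)) !compA p1_pair p2_pair. Qed.

Lemma pair_ext (A B X : K) (h h' : hom X (prod A B)) :
  p1 A B ⊙ h = p1 A B ⊙ h' -> p2 A B ⊙ h = p2 A B ⊙ h' -> h = h'.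
Proof. by move=> e1 e2; rewrite -(pair_uniq h) -(pair_uniq h') e1 e2. Qed.

Lemma pair_p1p2 (A B : K) : pair (p1 A B) (p2 A B) = idm (prod A B).
Proof. by apply: pair_ext; rewrite ?p1_pair ?p2_pair compm1. Qed.

Lemma pmapE (A B A' B' : K) (f : hom A A') (g : hom B B') :
  pmap f g = pair (f ⊙ p1 A B) (g ⊙ p2 A B).
Proof. by []. Qed.

Lemma p1_pmap (A B A' B' : K) (f : hom A A') (g : hom B B') :
  p1 A' B' ⊙ pmap f g = f ⊙ p1 A B.
Proof. exact: p1_pair. Qed.

Lemma pmap_pair (A B A' B' X : K) (f : hom A A') (g : hom B B')
    (h : hom X A) (k : hom X B) :
  pmap f g ⊙ pair h k = pair (f ⊙ h) (g ⊙ k).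
Proof. by rewrite pmapE pair_comp -!compA p1_pair p2_pair. Qed.

Lemma pmap_comp (A B A' B' A'' B'' : K) (f : hom A A') (g : hom B B')
    (f' : hom A' A'') (g' : hom B' B'') :
  pmap f' g' ⊙ pmap f g = pmap (f' ⊙ f) (g' ⊙ g).
Proof. by rewrite {1}pmapE pmap_pair !compA. Qed.

Lemma pmap11 (A B : K) : pmap (idm A) (idm B) = idm (prod A B).
Proof. by rewrite pmapE !comp1m pair_p1p2. Qed.

Lemma projn_tuplen (A X : K) (n : nat) (fs : 'I_n -> hom X A) (i : 'I_n) :
  projn A i ⊙ tuplen fs = fs i.
Proof.
elim: n fs i => [|[|k] IH] fs i; first by case: i.
  by rewrite /= comp1m; congr fs; apply/val_inj; case: i => [[]].
rewrite /=; case: unliftP => [j ->|->]; last exact: p1_pair.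
by rewrite -compA p2_pair IH.
Qed.

Lemma tuplen_ext (A X : K) (n : nat) (h h' : hom X (pow A n)) :
  (forall i, projn A i ⊙ h = projn A i ⊙ h') -> h = h'.
Proof.
elim: n h h' => [|[|k] IH] h h' E.
- by rewrite (bang_uniq h) (bang_uniq h').
- by have := E ord0; rewrite /= !comp1m.
- apply: pair_ext; first by have := E ord0; rewrite /= unlift_none.
  by apply: IH => j; have := E (lift ord0 j); rewrite /= liftK -!compA.
Qed.

Definition prj (A : K) (V : finType) (v : V) : hom (pow A #|V|) A :=
  projn A (enum_rank v).

Definition tup (A X : K) (V : finType) (F : V -> hom X A) : hom X (pow A #|V|) :=
  tuplen (fun i => F (enum_val i)).

Lemma prj_tup (A X : K) (V : finType) (F : V -> hom X A) (v : V) :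
  prj A v ⊙ tup F = F v.
Proof. by rewrite /prj /tup projn_tuplen enum_rankK. Qed.

Lemma tup_ext (A X : K) (V : finType) (h h' : hom X (pow A #|V|)) :
  (forall v : V, prj A v ⊙ h = prj A v ⊙ h') -> h = h'.
Proof.
by move=> E; apply: tuplen_ext => i; have := E (enum_val i); rewrite /prj enum_valK.
Qed.

Lemma tup_eq (A X : K) (V : finType) (F G : V -> hom X A) :
  F =1 G -> tup F = tup G.
Proof. by move=> E; apply: tup_ext => v; rewrite !prj_tup. Qed.

Lemma tup_comp (A X Y : K) (V : finType) (F : V -> hom X A) (h : hom Y X) :
  tup F ⊙ h = tup (fun v => F v ⊙ h).
Proof. by apply: tup_ext => v; rewrite compA !prj_tup. Qed.

Lemma prj_diag (A : K) (V : finType) (v : V) : prj A v ⊙ diag A #|V| = idm A.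
Proof. exact: prj_tup. Qed.

Definition reindex (A : K) (U V : finType) (f : U -> V) :
    hom (pow A #|V|) (pow A #|U|) :=
  tup (fun u => prj A (f u)).

Lemma prj_reindex (A : K) (U V : finType) (f : U -> V) (u : U) :
  prj A u ⊙ reindex A f = prj A (f u).
Proof. exact: prj_tup. Qed.

Lemma reindex_diag (A : K) (U V : finType) (f : U -> V) :
  reindex A f ⊙ diag A #|V| = diag A #|U|.
Proof. by apply: tup_ext => u; rewrite compA prj_reindex !prj_diag. Qed.

End Cartesian.

Ltac simpl_pairs :=
  rewrite ?pmapE; repeat progress (rewrite ?pair_comp -?compA ?p1_pair ?p2_pair
    ?comp1m ?compm1 ?pair_uniq ?pair_p1p2).

Section Conway.
Variable K : ConwayCat.

Lemma dagger_fixpoint (A C : K) (f : hom (prod A C) A) :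
  dagger f = f ⊙ pair (dagger f) (idm C).
Proof. by have := dagger_comp f (p1 A C); rewrite pair_p1p2 compm1 p1_pair. Qed.

Lemma dagger_fixpoint_comp (A C X : K) (f : hom (prod A C) A) (h : hom X C) :
  f ⊙ pair (dagger f ⊙ h) h = dagger f ⊙ h.
Proof. by rewrite [in RHS]dagger_fixpoint -compA pair_comp comp1m. Qed.

Lemma dagger_const (A C : K) (g : hom C A) : dagger (g ⊙ p2 A C) = g.
Proof.
have := dagger_comp (g ⊙ p2 A C) (p1 A C).
by rewrite pair_p1p2 compm1 => ->; rewrite -compA p2_pair compm1.
Qed.

Lemma dagger_retract (X Y C : K) (s : hom X Y) (t : hom Y X)
    (F : hom (prod Y C) Y) :
  s ⊙ t = idm Y -> dagger (t ⊙ F ⊙ pmap s (idm C)) = t ⊙ dagger F.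
Proof.
move=> st; have := dagger_comp (t ⊙ F) (s ⊙ p1 X C).
rewrite -[Z in pair _ Z]comp1m -pmapE => ->.
by rewrite -[s ⊙ p1 X C ⊙ _]compA p1_pair compA st comp1m -compA -dagger_fixpoint.
Qed.

Lemma dagger_single (A C : K) (U : finType) (u0 : U) :
    (forall u, u = u0) -> forall S : hom (prod (pow A #|U|) C) (pow A #|U|),
  prj A u0 ⊙ dagger S = dagger (prj A u0 ⊙ S ⊙ pmap (diag A #|U|) (idm C)).
Proof.
move=> Hu S; have st : diag A #|U| ⊙ prj A u0 = idm _.
  by apply: tup_ext => u; rewrite (Hu u) compA prj_diag comp1m compm1.
by rewrite (dagger_retract _ st).
Qed.

Lemma dagger_pair_indep (X Y C : K) (f : hom (prod X C) X) (g : hom (prod Y C) Y) :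
  dagger (pair (f ⊙ pmap (p1 X Y) (idm C)) (g ⊙ pmap (p2 X Y) (idm C))) =
  pair (dagger f) (dagger g).
Proof.
(* Double the variable: f is solved in the inner copy and g in the outer one. *)
set C' := prod (prod X Y) C.
pose Psi : hom (prod (prod X Y) C') (prod X Y) :=
  pair (f ⊙ pair (p1 X Y ⊙ p1 _ _) (p2 _ C ⊙ p2 _ _))
       (g ⊙ pair (p2 X Y ⊙ p1 _ C ⊙ p2 _ C') (p2 _ C ⊙ p2 _ _)).
have PsiD : Psi ⊙ pair (p1 _ C) (pair (p1 _ C) (p2 _ C)) =
          pair (f ⊙ pmap (p1 X Y) (idm C)) (g ⊙ pmap (p2 X Y) (idm C)).
  by rewrite /Psi; simpl_pairs.
rewrite -PsiD -dagger_double.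
pose f0 : hom (prod X C') (prod X Y) :=
  pair (f ⊙ pair (p1 X C') (p2 _ C ⊙ p2 _ _))
       (g ⊙ pair (p2 X Y ⊙ p1 _ C ⊙ p2 X C') (p2 _ C ⊙ p2 _ _)).
have PsiE : f0 ⊙ pair (p1 X Y ⊙ p1 _ C') (p2 _ C') = Psi.
  by rewrite /f0 /Psi; simpl_pairs.
have := dagger_comp f0 (p1 X Y ⊙ p1 _ C'); rewrite PsiE => ->.
have f0_fst : p1 X Y ⊙ p1 (prod X Y) C' ⊙ pair f0 (p2 X C') = f ⊙ pmap (idm X) (p2 _ C).
  by rewrite /f0; simpl_pairs.
rewrite f0_fst dagger_param /f0.
pose f1 : hom (prod Y C) (prod X Y) := pair (dagger f ⊙ p2 Y C) (p1 Y C).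
have f0_fix : pair (f ⊙ pair (p1 X C') (p2 (prod X Y) C ⊙ p2 X C'))
         (g ⊙ pair (p2 X Y ⊙ p1 (prod X Y) C ⊙ p2 X C') (p2 (prod X Y) C ⊙ p2 X C'))
         ⊙ pair (dagger f ⊙ p2 (prod X Y) C) (idm C')
       = f1 ⊙ pair (g ⊙ pmap (p2 X Y) (idm C)) (p2 _ C).
  by rewrite /f1; simpl_pairs; rewrite dagger_fixpoint_comp.
rewrite f0_fix dagger_comp /f1.
have gE : g ⊙ pmap (p2 X Y) (idm C) ⊙ pair (pair (dagger f ⊙ p2 Y C) (p1 Y C)) (p2 Y C) = g.
  by simpl_pairs.
by rewrite gE; simpl_pairs.
Qed.

Lemma dagger_pair_cross (X Y C : K) (u : hom (prod Y C) X) (v : hom (prod X C) Y) :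
  dagger (pair (u ⊙ pmap (p2 X Y) (idm C)) (v ⊙ pmap (p1 X Y) (idm C))) =
  pair (u ⊙ pair (dagger (v ⊙ pair u (p2 Y C))) (idm C)) (dagger (v ⊙ pair u (p2 Y C))).
Proof.
set C' := prod (prod X Y) C.
pose chi : hom (prod (prod X Y) C') (prod X Y) :=
  pair (u ⊙ pair (p2 X Y ⊙ p1 _ C ⊙ p2 _ C') (p2 _ C ⊙ p2 _ C'))
       (v ⊙ pair (p1 X Y ⊙ p1 _ C') (p2 _ C ⊙ p2 _ C')).
have chiD : chi ⊙ pair (p1 _ C) (pair (p1 _ C) (p2 _ C)) =
          pair (u ⊙ pmap (p2 X Y) (idm C)) (v ⊙ pmap (p1 X Y) (idm C)).
  by rewrite /chi; simpl_pairs.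
rewrite -chiD -dagger_double.
pose f0 : hom (prod X C') (prod X Y) :=
  pair (u ⊙ pair (p2 X Y ⊙ p1 _ C ⊙ p2 X C') (p2 _ C ⊙ p2 X C'))
       (v ⊙ pair (p1 X C') (p2 _ C ⊙ p2 X C')).
have chiE : f0 ⊙ pair (p1 X Y ⊙ p1 _ C') (p2 _ C') = chi by rewrite /f0 /chi; simpl_pairs.
have := dagger_comp f0 (p1 X Y ⊙ p1 _ C'); rewrite chiE => ->.
have f0_fst : p1 X Y ⊙ p1 (prod X Y) C' ⊙ pair f0 (p2 X C') =
          (u ⊙ pmap (p2 X Y) (idm C)) ⊙ p2 X C'.
  by rewrite /f0; simpl_pairs.
rewrite f0_fst dagger_const.
pose k := v ⊙ pair u (p2 Y C).
pose f1 : hom (prod Y C) (prod X Y) := pair u k.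
have f0_fix : f0 ⊙ pair (u ⊙ pmap (p2 X Y) (idm C)) (idm C') =
          f1 ⊙ pair (p2 X Y ⊙ p1 _ C) (p2 _ C).
  by rewrite /f0 /f1 /k; simpl_pairs.
rewrite f0_fix dagger_comp.
have kE : p2 X Y ⊙ p1 (prod X Y) C ⊙ pair f1 (p2 Y C) = k by rewrite /f1; simpl_pairs.
by rewrite kE /f1 pair_comp -dagger_fixpoint.
Qed.

Definition assocX (X Y C : K) : hom (prod X (prod Y C)) (prod (prod X Y) C) :=
  pair (pair (p1 X _) (p1 Y C ⊙ p2 X _)) (p2 Y C ⊙ p2 X _).
Definition assocY (X Y C : K) : hom (prod Y (prod X C)) (prod (prod X Y) C) :=
  pair (pair (p1 X C ⊙ p2 Y _) (p1 Y _)) (p2 X C ⊙ p2 Y _).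

Definition bekic_snd (X Y C : K) (Phi : hom (prod (prod X Y) C) (prod X Y)) :
    hom (prod X C) Y :=
  dagger (p2 X Y ⊙ Phi ⊙ assocY X Y C).

Definition bekic_fst (X Y C : K) (Phi : hom (prod (prod X Y) C) (prod X Y)) : hom C X :=
  dagger (p1 X Y ⊙ Phi ⊙ pair (pair (p1 X C) (bekic_snd Phi)) (p2 X C)).

Lemma dagger_bekic (X Y C : K) (Phi : hom (prod (prod X Y) C) (prod X Y)) :
  dagger Phi = pair (bekic_fst Phi) (bekic_snd Phi ⊙ pair (bekic_fst Phi) (idm C)).
Proof.
rewrite /bekic_fst; set GY := bekic_snd Phi; set a := dagger (p1 X Y ⊙ Phi ⊙ _).
set f := p1 X Y ⊙ Phi; set g := p2 X Y ⊙ Phi.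
set FX := dagger (f ⊙ assocX X Y C).
set C' := prod (prod X Y) C.
pose Psi : hom (prod (prod X Y) C') (prod X Y) :=
  pair (f ⊙ pair (pair (p1 X Y ⊙ p1 _ C') (p2 X Y ⊙ p1 _ C ⊙ p2 _ C')) (p2 _ C ⊙ p2 _ C'))
       (g ⊙ pair (pair (p1 X Y ⊙ p1 _ C ⊙ p2 _ C') (p2 X Y ⊙ p1 _ C'))
                 (p2 _ C ⊙ p2 _ C')).
have PsiD : Psi ⊙ pair (p1 _ C) (pair (p1 _ C) (p2 _ C)) = Phi.
  by rewrite /Psi /f /g; simpl_pairs.
rewrite -PsiD -dagger_double.
have Psi_split : Psi =
  pair ((f ⊙ assocX X Y C ⊙ pmap (idm X) (pmap (p2 X Y) (idm C))) ⊙ pmap (p1 X Y) (idm C'))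
       ((g ⊙ assocY X Y C ⊙ pmap (idm Y) (pmap (p1 X Y) (idm C))) ⊙ pmap (p2 X Y) (idm C')).
  by rewrite /Psi /assocX /assocY; simpl_pairs.
rewrite Psi_split dagger_pair_indep !dagger_param -/FX -/GY dagger_pair_cross.
set b := dagger (GY ⊙ pair FX (p2 Y C)).
have aE : a = FX ⊙ pair b (idm C).
  pose phi := f ⊙ assocX X Y C ⊙ pmap (idm X) (pair GY (p2 X C)).
  have := dagger_double phi; rewrite /phi dagger_param -/FX.
  have -> : f ⊙ assocX X Y C ⊙ pmap (idm X) (pair GY (p2 X C)) ⊙
              pair (p1 X C) (pair (p1 X C) (p2 X C)) =
            p1 X Y ⊙ Phi ⊙ pair (pair (p1 X C) GY) (p2 X C).
    by rewrite /f /assocX; simpl_pairs.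
  by rewrite -/a dagger_comp => <-.
rewrite aE; congr pair.
by rewrite {1}/b dagger_fixpoint -/b; simpl_pairs.
Qed.

End Conway.

Section Systems.
Variable K : ConwayCat.

Fixpoint iter_sys (A P : K) (h : hom (prod A P) A) (j : nat) : hom (prod A P) A :=
  if j is j'.+1 then h ⊙ pair (iter_sys h j') (p2 A P) else p1 A P.

Lemma iter_sys_dagger (A P : K) (h : hom (prod A P) A) j :
  iter_sys h j ⊙ pair (dagger h) (idm P) = dagger h.
Proof.
elim: j => [|j IH] /=; first exact: p1_pair.
by rewrite -compA pair_comp IH p2_pair -dagger_fixpoint.
Qed.

(* If component v of the system only depends on components of smaller depth,
   iterating it max depth + 1 times yields its solution [tup E]. *)
Lemma dagger_stratified (A P : K) (V : finType)
    (h : hom (prod (pow A #|V|) P) (pow A #|V|)) (depth : V -> nat) (E : V -> hom P A) :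
  (forall v (k : hom (prod (pow A #|V|) P) (pow A #|V|)),
     (forall v', depth v' < depth v -> prj A v' ⊙ k = E v' ⊙ p2 _ P) ->
     prj A v ⊙ (h ⊙ pair k (p2 _ P)) = E v ⊙ p2 _ P) ->
  dagger h = tup E.
Proof.
move=> hE; set M := (\max_v depth v).+1.
have iterE j v : depth v < j -> prj A v ⊙ iter_sys h j = E v ⊙ p2 _ P.
  elim: j v => [//|j IH] v lt_vj /=.
  by apply: hE => v' lt_v'v; apply: IH; exact: leq_trans lt_v'v lt_vj.
have iterME : iter_sys h M = tup E ⊙ p2 _ P.
  apply: tup_ext => v; rewrite iterE ?compA ?prj_tup // ltnS.
  exact: (leq_bigmax v).
by rewrite -(iter_sys_dagger h M) iterME -compA p2_pair compm1.
Qed.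

Definition preim_pick (U V : finType) (i : U -> V) (v : V) := [pick u | i u == v].

Lemma preim_pick_some (U V : finType) (i : U -> V) v u :
  preim_pick i v = Some u -> i u = v.
Proof. by rewrite /preim_pick; case: pickP => [u' /eqP <- [->]|]. Qed.

Lemma preim_pick_none (U V : finType) (i : U -> V) v :
  preim_pick i v = None -> forall u, i u != v.
Proof. by rewrite /preim_pick; case: pickP => [//|H] _ u; rewrite H. Qed.

Section Split.
Variables (A : K) (U V : finType) (i : U -> V).

(* A^V is a retract of A^U x A^V: the coordinates in the image of i
   may be read from the first factor. *)
Definition split_coords : hom (pow A #|V|) (prod (pow A #|U|) (pow A #|V|)) :=
  pair (reindex A i) (idm _).

Definition merge_coords : hom (prod (pow A #|U|) (pow A #|V|)) (pow A #|V|) :=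
  tup (fun v => if preim_pick i v is Some u then prj A u ⊙ p1 _ _ else prj A v ⊙ p2 _ _).

Lemma merge_split : merge_coords ⊙ split_coords = idm _.
Proof.
apply: tup_ext => v; rewrite compA prj_tup compm1 /preim_pick.
by case: pickP => [u /eqP <-|_]; rewrite -compA ?p1_pair ?p2_pair ?compm1 ?prj_reindex.
Qed.

Lemma reindex_merge : injective i -> reindex A i ⊙ merge_coords = p1 _ _.
Proof.
move=> inj_i; apply: tup_ext => u; rewrite compA prj_reindex prj_tup /preim_pick.
by case: pickP => [u' /eqP /inj_i -> //|/(_ u)]; rewrite eqxx.
Qed.

End Split.

Lemma reindex_dagger (A C : K) (U V : finType) (i : U -> V)
    (S : hom (prod (pow A #|V|) C) (pow A #|V|))
    (S' : hom (prod (pow A #|U|) C) (pow A #|U|)) :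
  injective i -> reindex A i ⊙ S = S' ⊙ pmap (reindex A i) (idm C) ->
  reindex A i ⊙ dagger S = dagger S'.
Proof.
move=> inj_i SE.
have -> : reindex A i ⊙ dagger S = p1 _ _ ⊙ (split_coords A i ⊙ dagger S).
  by rewrite compA p1_pair.
rewrite -(dagger_retract _ (merge_split A i)) dagger_bekic p1_pair /bekic_fst.
congr dagger.
rewrite /split_coords; simpl_pairs; rewrite compA SE; simpl_pairs.
by rewrite compA reindex_merge //; simpl_pairs.
Qed.

End Systems.

Section Eliminate.
Variables (K : ConwayCat) (A C : K) (U V : finType) (i : U -> V) (pi : V -> U).
Variables (p : V -> V) (depth : V -> nat) (S : hom (prod (pow A #|V|) C) (pow A #|V|)).
Hypothesis pi_i : cancel i pi.

Lemma merge_pair (X : K) (x : hom X (pow A #|U|)) (k : hom X (pow A #|V|)) :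
  (forall v, preim_pick i v = None -> prj A v ⊙ k = prj A (pi v) ⊙ x) ->
  merge_coords A i ⊙ pair x k = reindex A pi ⊙ x.
Proof.
move=> kE; apply: tup_ext => v; rewrite compA prj_tup compA prj_reindex.
case Ev: (preim_pick i v) => [u|]; last by rewrite -compA p2_pair kE.
by rewrite -compA p1_pair -(preim_pick_some Ev) pi_i.
Qed.

(* Each variable v outside the image of i is a copy of the variable p v, and
   following p from v eventually reaches the image of i at a variable with the
   same image under pi. *)
Hypothesis S_copy :
  forall v, preim_pick i v = None -> prj A v ⊙ S = prj A (p v) ⊙ p1 _ C.
Hypothesis pi_p : forall v, preim_pick i v = None -> pi v = pi (p v).
Hypothesis depth_p : forall v, preim_pick i v = None ->
  preim_pick i (p v) = None -> depth (p v) < depth v.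

Let S_split := split_coords A i ⊙ S ⊙ pmap (merge_coords A i) (idm C).
Let S_image := reindex A i ⊙ S ⊙ pmap (reindex A pi) (idm C).
Let E (v : V) := if preim_pick i v is Some _ then prj A v ⊙ S ⊙ pmap (reindex A pi) (idm C)
                 else prj A (pi v) ⊙ p1 _ C.

Lemma dagger_split_inner :
  dagger (p2 _ _ ⊙ S_split ⊙ assocY _ _ _) = tup E.
Proof.
pose M := \max_v depth v.
apply: (dagger_stratified (depth := fun v => if preim_pick i v is Some _ then M.+1 else depth v)).
move=> v k IH; set P := prod (pow A #|U|) C.
have -> : p2 _ _ ⊙ S_split ⊙ assocY _ _ _ ⊙ pair k (p2 _ P) =
          S ⊙ pair (merge_coords A i ⊙ pair (p1 _ C ⊙ p2 _ P) k) (p2 _ C ⊙ p2 _ P).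
  by rewrite /S_split /split_coords /assocY; simpl_pairs.
rewrite /E; case Ev: (preim_pick i v) => [u|].
  rewrite merge_pair => [|v' Ev']; first by simpl_pairs.
  by rewrite IH /E Ev' ?compA // Ev ltnS; apply: leq_bigmax.
rewrite compA (S_copy Ev) -compA p1_pair compA prj_tup.
case Epv: (preim_pick i (p v)) => [u|].
  by rewrite -compA p1_pair (pi_p Ev) -(preim_pick_some Epv) pi_i compA.
rewrite -compA p2_pair IH; first by rewrite /E Epv (pi_p Ev).
by rewrite Epv Ev depth_p.
Qed.

Lemma dagger_eliminate : dagger S = reindex A pi ⊙ dagger S_image.
Proof.
have -> : dagger S = p2 _ _ ⊙ (split_coords A i ⊙ dagger S).
  by rewrite compA /split_coords p2_pair comp1m.
rewrite -(dagger_retract _ (merge_split A i)) dagger_bekic p2_pair /bekic_fst /bekic_snd -/S_split.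
rewrite dagger_split_inner.
have -> : p1 _ _ ⊙ S_split ⊙ pair (pair (p1 _ C) (tup E)) (p2 _ C) = S_image.
  rewrite /S_split /split_coords; simpl_pairs; rewrite merge_pair => [|v Ev].
    by rewrite /S_image; simpl_pairs.
  by rewrite prj_tup /E Ev.
apply: tup_ext => v; rewrite compA prj_tup compA prj_reindex /E.
case Ev: (preim_pick i v) => [u|]; last by rewrite -compA p1_pair.
rewrite -(preim_pick_some Ev) pi_i [in RHS]dagger_fixpoint.
by rewrite !compA prj_reindex.
Qed.

End Eliminate.

Section Automata.
Variable K : ConwayCat.

Definition trans_sys (Q : automaton) (A C : K) (f : hom (prod (pow A #|input Q|) C) A) :
    hom (prod (pow A #|state Q|) C) (pow A #|state Q|) :=
  tup (fun q : state Q => f ⊙ pmap (tup (fun a : input Q => prj A (act q a))) (idm C)).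

Lemma fQE (Q : automaton) (A C : K) (f : hom (prod (pow A #|input Q|) C) A) :
  fQ f = trans_sys f.
Proof. by []. Qed.

(* The system Phi on A^L, run through the transitions of Q, with
   (A^L)^(state Q) flattened to A^(state Q x L). *)
Definition flat_sys (Q : automaton) (L : finType) (A C : K)
    (Phi : hom (prod (pow (pow A #|L|) #|input Q|) C) (pow A #|L|)) :=
  tup (fun v : state Q * L => prj A v.2 ⊙ Phi ⊙
         pmap (tup (fun a => tup (fun l : L => prj A (act v.1 a, l)))) (idm C)).

Lemma gamma_pow_flat (Q : automaton) (L : finType) (A C : K)
    (Phi : hom (prod (pow (pow A #|L|) #|input Q|) C) (pow A #|L|)) :
  Gamma K Q ->
  dagger (flat_sys Phi) = tup (fun v : state Q * L => prj A v.2) ⊙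
    dagger (Phi ⊙ pmap (diag (pow A #|L|) #|input Q|) (idm C)).
Proof.
move=> HQ; set B := pow A #|L|.
pose s := tup (fun q : state Q => tup (fun l : L => prj A (q, l))).
pose t := tup (fun v : state Q * L => prj A v.2 ⊙ prj B v.1).
have st : s ⊙ t = idm _.
  apply: tup_ext => q; rewrite compA prj_tup compm1 tup_comp.
  by apply: tup_ext => l; rewrite !prj_tup.
have -> : flat_sys Phi = t ⊙ trans_sys Phi ⊙ pmap s (idm C).
  apply: tup_ext => -[q l]; rewrite prj_tup !compA prj_tup /=.
  rewrite -[prj A l ⊙ prj B q ⊙ _]compA prj_tup -!compA pmap_comp comp1m tup_comp.
  by do 2 congr (_ ⊙ _); congr pmap; apply: tup_eq => a; rewrite prj_tup.
rewrite (dagger_retract _ st) -fQE HQ compA.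
by congr (_ ⊙ _); apply: tup_ext => v; rewrite compA !prj_tup -compA prj_diag compm1.
Qed.

Lemma gamma_sub (Q Q' : automaton) (i : state Q' -> state Q) (lam : input Q' -> input Q) :
  injective i -> (forall q a, i (act q a) = act (i q) (lam a)) ->
  Gamma K Q -> Gamma K Q'.
Proof.
move=> inj_i iE HQ A C f; pose F := f ⊙ pmap (reindex A lam) (idm C).
have subE : reindex A i ⊙ trans_sys F = trans_sys f ⊙ pmap (reindex A i) (idm C).
  apply: tup_ext => q; rewrite compA prj_reindex !prj_tup compA prj_tup /F.
  rewrite -!compA !pmap_comp comp1m; congr (_ ⊙ pmap _ _).
  by apply: tup_ext => a; rewrite !compA prj_reindex !prj_tup iE.
rewrite fQE -(reindex_dagger inj_i subE) -fQE HQ compA reindex_diag.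
by rewrite /F -compA pmap_comp comp1m reindex_diag.
Qed.

Definition prod_automaton (Q : automaton) (S : finType) (actS : S -> input Q -> S) :=
  @Automaton (state Q * S)%type (input Q) (fun p a => (act p.1 a, actS p.2 a)).

Lemma gamma_prod (Q : automaton) (S : finType) (actS : S -> input Q -> S) :
  Gamma K Q -> Gamma K (@Automaton S (input Q) actS) -> Gamma K (prod_automaton actS).
Proof.
move=> HQ HS A C f; rewrite fQE; set B := pow A #|S|.
pose Phi := tup (fun l : S =>
  f ⊙ pmap (tup (fun a : input Q => prj A (actS l a) ⊙ prj B a)) (idm C)).
have -> : trans_sys (Q := prod_automaton actS) f = flat_sys Phi.
  apply: tup_eq => -[q l] /=; rewrite /Phi prj_tup -compA pmap_comp comp1m tup_comp.
  by congr (_ ⊙ pmap _ _); apply: tup_eq => a; rewrite -compA !prj_tup.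
rewrite gamma_pow_flat //.
have -> : Phi ⊙ pmap (diag B #|input Q|) (idm C) =
          trans_sys (Q := @Automaton S (input Q) actS) f.
  rewrite /Phi tup_comp; apply: tup_eq => l; rewrite -compA pmap_comp comp1m tup_comp.
  by congr (_ ⊙ pmap _ _); apply: tup_eq => a; rewrite -compA prj_diag compm1.
rewrite -fQE HS compA; congr (_ ⊙ _).
by apply: tup_ext => v; rewrite compA prj_tup !prj_diag.
Qed.

Lemma dagger_copies (A C : K) (L : finType) (g : hom (prod A C) A) :
  dagger (tup (fun l : L => g ⊙ pmap (prj A l) (idm C))) = diag A #|L| ⊙ dagger g.
Proof.
apply: tup_ext => l; rewrite compA prj_diag comp1m.
pose i := fun _ : unit => l.
have inj_i : injective i by move=> [] [].
have subE : reindex A i ⊙ tup (fun l : L => g ⊙ pmap (prj A l) (idm C)) =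
         tup (fun _ : unit => g ⊙ pmap (prj A tt) (idm C)) ⊙ pmap (reindex A i) (idm C).
  apply: tup_ext => u; rewrite compA prj_reindex prj_tup compA prj_tup.
  by rewrite -compA pmap_comp comp1m prj_reindex.
rewrite -[prj A l](prj_reindex A i tt) -compA (reindex_dagger inj_i subE).
rewrite (dagger_single (u0 := tt)) => [|[]//].
by rewrite prj_tup -compA pmap_comp comp1m prj_diag pmap11 compm1.
Qed.

End Automata.

Section Words.
Variables (K : ConwayCat) (Q : automaton) (I : finType) (w : I -> seq (input Q)).
Variable a0 : input Q.
Hypothesis w_gt0 : forall i, 0 < size (w i).

Definition word_automaton : automaton :=
  @Automaton (state Q) I (fun q i => foldl (@act Q) q (w i)).

Let N := \max_i size (w i).

(* None is the start of every word and Some (i, k) the position after the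
   first k letters of w i; positions with k >= size (w i) are never reached. *)
Let L : finType := option (I * 'I_N.+1).

Lemma size_w_le i : size (w i) <= N.
Proof. exact: (leq_bigmax (F := fun i => size (w i)) i). Qed.

Definition pos (i : I) (k : nat) : L := if k < size (w i) then Some (i, inord k) else None.
Definition next_pos (l : L) : L := if l is Some (i, k) then pos i k.+1 else None.
Definition letter (l : L) : input Q := if l is Some (i, k) then nth a0 (w i) k else a0.
Definition depth_pos (l : L) : nat := if l is Some (i, k) then size (w i) - k else 0.

Lemma depth_next_pos l : next_pos l != None -> depth_pos (next_pos l) < depth_pos l.
Proof.
case: l => [[i k]|] //=; rewrite /pos; case: ltnP => // lt_k1 _ /=.
rewrite inordK; first exact: ltn_sub2l (ltnW lt_k1) (ltnSn k).
by rewrite ltnS (leq_trans (ltnW lt_k1) (size_w_le i)).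
Qed.

Definition start (q : state Q) : state Q * L := (q, None).

(* An unused position copies the start position after the letter a0. *)
Definition finish (v : state Q * L) : state Q :=
  if v.2 is Some (i, k) then
    if k < size (w i) then foldl (@act Q) v.1 (drop k (w i)) else act v.1 a0
  else v.1.

Definition step (v : state Q * L) : state Q * L := (act v.1 (letter v.2), next_pos v.2).

Lemma finish_pos q i k :
  k <= size (w i) -> finish (q, pos i k) = foldl (@act Q) q (drop k (w i)).
Proof.
move=> le_k; rewrite /pos /finish /=; case: ltnP => lt_k /=.
  by rewrite inordK ?lt_k // ltnS (leq_trans (ltnW lt_k)) ?size_w_le.
have -> : k = size (w i) by apply/eqP; rewrite eqn_leq le_k lt_k.
by rewrite drop_size.
Qed.

Lemma finish_step v : v.2 != None -> finish v = finish (step v).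
Proof.
case: v => q [[i k]|] //= _; rewrite {1}/finish /step /=.
case: ltnP => lt_k; first by rewrite finish_pos // (drop_nth a0 lt_k).
by rewrite nth_default // /pos ltnNge (leq_trans lt_k (leqnSn k)).
Qed.

Lemma preim_pick_start v : preim_pick start v = None -> v.2 != None.
Proof. by case: v => q [l|] // /preim_pick_none/(_ q); rewrite eqxx. Qed.

Section PositionSystem.
Variables (A C : K) (f : hom (prod (pow A #|I|) C) A).
Local Notation B := (pow A #|L|).

Definition pos_sys : hom (prod (pow B #|input Q|) C) B :=
  tup (fun l : L =>
    if l is Some (i, k) then prj A (pos i k.+1) ⊙ prj B (nth a0 (w i) k) ⊙ p1 _ C
    else f ⊙ pmap (tup (fun i : I => prj A (pos i 1) ⊙ prj B (nth a0 (w i) 0))) (idm C)).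

Lemma dagger_pos_sys :
  prj A None ⊙ dagger (pos_sys ⊙ pmap (diag B #|input Q|) (idm C)) =
  dagger (f ⊙ pmap (diag A #|I|) (idm C)).
Proof.
have not_start l : preim_pick (fun _ : unit => None : L) l = None -> l != None.
  by move/preim_pick_none/(_ tt); rewrite eq_sym.
rewrite (dagger_eliminate (i := fun _ : unit => None : L) (pi := fun _ => tt)
           (p := next_pos) (depth := depth_pos)).
- rewrite (compA (prj A None)) prj_reindex (dagger_single (u0 := tt)) => [|[]//].
  congr dagger; rewrite -!compA (compA (prj A tt)) prj_reindex (compA (prj A _)).
  rewrite /pos_sys prj_tup -!compA !pmap_comp !comp1m; congr (_ ⊙ pmap _ _).
  rewrite reindex_diag tup_comp; apply: tup_ext => i; rewrite prj_tup.
  by rewrite -compA (compA (prj B _)) !prj_diag comp1m prj_diag.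
- by case.
- move=> [[i k]|] /not_start //= _.
  by rewrite compA /pos_sys prj_tup -!compA p1_pmap (compA (prj B _)) prj_diag comp1m.
- by [].
- by move=> l _ /not_start; exact: depth_next_pos.
Qed.

Lemma reindex_flat_pos_sys :
  reindex A start ⊙ flat_sys pos_sys ⊙ pmap (reindex A finish) (idm C) =
  trans_sys (Q := word_automaton) f.
Proof.
apply: tup_ext => q; rewrite !compA prj_reindex prj_tup /= /pos_sys prj_tup.
rewrite -!compA !pmap_comp !comp1m prj_tup; congr (_ ⊙ pmap _ _).
apply: tup_ext => i; rewrite compA prj_tup -compA (compA (prj B _)) prj_tup compA prj_tup.
have first_letter : foldl (@act Q) q (w i) =
                    foldl (@act Q) (act q (nth a0 (w i) 0)) (drop 1 (w i)).
  by rewrite -{1}(drop0 (w i)) (drop_nth a0 (w_gt0 i)).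
by rewrite prj_reindex finish_pos ?w_gt0 // prj_tup /= first_letter.
Qed.

Lemma dagger_flat_pos_sys :
  dagger (flat_sys pos_sys) = reindex A finish ⊙ dagger (trans_sys (Q := word_automaton) f).
Proof.
rewrite -reindex_flat_pos_sys.
apply: (dagger_eliminate (p := step) (depth := fun v => depth_pos v.2)).
- by [].
- move=> [q [[i k]|]] /preim_pick_start //= _.
  rewrite /flat_sys prj_tup /= /pos_sys (@prj_tup _ A _ L) -!compA p1_pmap.
  by rewrite (compA (prj B _)) prj_tup compA prj_tup.
- by move=> v /preim_pick_start; exact: finish_step.
- by move=> v _ /preim_pick_start; exact: depth_next_pos.
Qed.

End PositionSystem.

Lemma gamma_words : Gamma K Q -> Gamma K word_automaton.
Proof.
move=> HQ A C f; rewrite fQE.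
have flatE := gamma_pow_flat (pos_sys f) HQ; rewrite dagger_flat_pos_sys in flatE.
have startK : reindex A start ⊙ reindex A finish = idm _.
  by apply: tup_ext => q; rewrite compA !prj_reindex compm1.
rewrite -[LHS]comp1m -startK -compA flatE compA.
have -> : reindex A start ⊙ tup (fun v : state Q * L => prj A v.2) =
          diag A #|state Q| ⊙ prj A (None : L).
  by apply: tup_ext => q; rewrite compA prj_reindex prj_tup compA prj_diag comp1m.
by rewrite -compA dagger_pos_sys.
Qed.

End Words.

Section HomImage.
Variables (K : ConwayCat) (X : finType) (mul : X -> X -> X) (G : finGroupType).
Variables (phi : X -> G) (s : G -> X).
Hypothesis phiM : {morph phi : x y / mul x y >-> (x * y)%g}.
Hypothesis sK : cancel s phi.
Local Notation XA := (@Automaton X X mul).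

Section Flattened.
Variables (A C : K) (f : hom (prod (pow A #|G|) C) A).
Local Notation B := (pow A #|G|).

Definition mul_sys : hom (prod (pow B #|X|) C) B :=
  tup (fun g : G => f ⊙ pmap (tup (fun g' : G => prj A (g * g')%g ⊙ prj B (s g'))) (idm C)).

Definition const_sys : hom (prod (pow B #|X|) C) B :=
  tup (fun k : G => f ⊙ pmap (tup (fun g' : G => prj A k ⊙ prj B (s g'))) (idm C)).

Lemma mul_sys_diag :
  mul_sys ⊙ pmap (diag B #|X|) (idm C) = trans_sys (Q := group_automaton G) f.
Proof.
rewrite /mul_sys tup_comp; apply: tup_eq => g; rewrite -compA pmap_comp comp1m tup_comp.
by congr (_ ⊙ pmap _ _); apply: tup_eq => g'; rewrite -compA prj_diag compm1.
Qed.

Lemma dagger_flat_const_sys : Gamma K XA ->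
  dagger (flat_sys (Q := XA) const_sys) = tup (fun v : X * G => prj A v.2) ⊙
    (diag A #|G| ⊙ dagger (f ⊙ pmap (diag A #|G|) (idm C))).
Proof.
move=> HX; rewrite gamma_pow_flat // -dagger_copies; congr (_ ⊙ dagger _).
rewrite /const_sys tup_comp; apply: tup_eq => k; rewrite -!compA !pmap_comp !comp1m.
congr (_ ⊙ pmap _ _); rewrite tup_comp; apply: tup_ext => g'.
by rewrite /= compA prj_tup -compA !prj_diag compm1 comp1m.
Qed.

(* Multiplying the G-coordinate by phi x turns the flattened mul_sys
   into the flattened const_sys. *)
Definition shift (v : X * G) : X * G := (v.1, (v.2 * phi v.1)%g).
Definition unshift (v : X * G) : X * G := (v.1, (v.2 * (phi v.1)^-1)%g).

Lemma reindex_shiftK : reindex A shift ⊙ reindex A unshift = idm _.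
Proof.
apply: tup_ext => v; rewrite compA !prj_reindex compm1 /shift /unshift /=.
by rewrite mulgK -surjective_pairing.
Qed.

Lemma flat_mul_sys :
  flat_sys (Q := XA) mul_sys =
  reindex A unshift ⊙ flat_sys (Q := XA) const_sys ⊙ pmap (reindex A shift) (idm C).
Proof.
apply: tup_ext => -[x g]; rewrite prj_tup !compA prj_reindex prj_tup /=.
rewrite /mul_sys /const_sys !prj_tup -!compA !pmap_comp !comp1m; congr (_ ⊙ pmap _ _).
rewrite !tup_comp; apply: tup_eq => g'.
rewrite -!compA !prj_tup /= !compA !prj_tup.
by rewrite /shift /= phiM sK mulgA mulgKV.
Qed.

End Flattened.

Lemma gamma_hom_image : Gamma K XA -> Gamma K (group_automaton G).
Proof.
move=> HX A C f; rewrite fQE.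
have := gamma_pow_flat (Q := XA) (mul_sys f) HX.
rewrite mul_sys_diag flat_mul_sys (dagger_retract _ (reindex_shiftK A)).
rewrite dagger_flat_const_sys // => flatE.
apply: tup_ext => g; rewrite compA prj_diag comp1m.
have := congr1 (comp (prj A (s 1%g, g))) flatE; rewrite [RHS]compA prj_tup /= => <-.
by rewrite compA prj_reindex compA prj_tup compA prj_diag comp1m.
Qed.

End HomImage.

Section Transformations.
Variable K : ConwayCat.

Definition pow_automaton (Q : automaton) (k : nat) : automaton :=
  @Automaton {ffun 'I_k -> state Q} (input Q) (fun m a => [ffun j => act (m j) a]).

Lemma gamma_pow_automaton (Q : automaton) k :
  Gamma K Q -> Gamma K (pow_automaton Q k.+1).
Proof.
move=> HQ; elim: k => [|k IH].
  apply: (gamma_sub (Q' := pow_automaton Q 1) (i := fun m => m ord0) (lam := id) _ _ HQ)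
    => [m m' E|m a].
    by apply/ffunP => j; rewrite (ord1 j).
  by rewrite ffunE.
have HQk := gamma_prod HQ IH.
apply: (gamma_sub (Q := @prod_automaton Q _ (@act (pow_automaton Q k.+1)))
          (Q' := pow_automaton Q k.+2)
          (i := fun m => (m ord0, [ffun j => m (lift ord0 j)])) (lam := id)
          _ _ HQk) => [m m' [E1 /ffunP E2]|m a /=].
  by apply/ffunP => j; case: (unliftP ord0 j) => [j' ->|->] //; have := E2 j'; rewrite !ffunE.
by rewrite !ffunE; congr (_, _); apply/ffunP => j; rewrite !ffunE.
Qed.

Lemma foldl_pow_automaton (Q : automaton) k (m : {ffun 'I_k -> state Q}) (u : seq (input Q)) :
  foldl (@act (pow_automaton Q k)) m u = [ffun j => foldl (@act Q) (m j) u].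
Proof.
elim: u m => [|a u IH] m /=; first by apply/ffunP => j; rewrite ffunE.
by rewrite IH; apply/ffunP => j; rewrite !ffunE.
Qed.

(* A transformation semigroup acts on Q^n, n = #|state Q|, as a subautomaton
   of the automaton of words over Q^n. *)
Lemma gamma_transformations (Q : automaton) (X : finType) (mulX : X -> X -> X)
    (tr : X -> {ffun state Q -> state Q}) (w : X -> seq (input Q)) :
  0 < #|state Q| -> 0 < #|input Q| -> injective tr ->
  (forall x y, tr (mulX x y) = mulT (tr x) (tr y)) ->
  (forall x, tr x = word_fun (w x)) -> (forall x, 0 < size (w x)) ->
  Gamma K Q -> Gamma K (@Automaton X X mulX).
Proof.
move=> Qn_gt0 Qm_gt0 inj_tr trM trE w_gt0 HQ.
have HQn : Gamma K (pow_automaton Q #|state Q|).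
  by rewrite -(prednK Qn_gt0); exact: gamma_pow_automaton.
set n := #|state Q| in HQn *.
pose a0 : input Q := enum_val (Ordinal Qm_gt0).
apply: (gamma_sub (Q := word_automaton (Q := pow_automaton Q n) w)
          (Q' := @Automaton X X mulX)
          (i := fun x => [ffun j : 'I_n => tr x (enum_val j)]) (lam := id)
          _ _ (gamma_words (Q := pow_automaton Q n) a0 w_gt0 HQn)) => [x y /ffunP E|x y /=].
  by apply: inj_tr; apply/ffunP => q; have := E (enum_rank q); rewrite !ffunE enum_rankK.
rewrite -/(@act (pow_automaton Q n)) foldl_pow_automaton; apply/ffunP => j.
by rewrite !ffunE trM /mulT ffunE (trE y) /word_fun ffunE.
Qed.

End Transformations.

Lemma word_fun_cat (Q : automaton) (u v : seq (input Q)) :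
  word_fun (u ++ v) = mulT (word_fun u) (word_fun v).
Proof. by apply/ffunP => q; rewrite /mulT /word_fun !ffunE foldl_cat. Qed.

Lemma mulTA (Q : automaton) : associative (@mulT Q).
Proof. by move=> a b c; apply/ffunP => q; rewrite /mulT !ffunE. Qed.

Section GroupInM.
Variables (K : ConwayCat) (Q : automaton).
Variables (H : {set {ffun state Q -> state Q}}) (e : {ffun state Q -> state Q}).
Hypothesis H_words : forall x, x \in H -> inM x.
Hypothesis e_H : e \in H.
Hypothesis mulT_H : forall x y, x \in H -> y \in H -> mulT x y \in H.
Hypothesis e_unit : forall x, x \in H -> mulT e x = x /\ mulT x e = x.
Hypothesis H_inv : forall x, x \in H -> exists2 y, y \in H & mulT x y = e /\ mulT y x = e.

Definition elt : finType := {x : {ffun state Q -> state Q} | x \in H}.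

Definition elt_mul (x y : elt) : elt :=
  exist _ (mulT (val x) (val y)) (mulT_H (valP x) (valP y)).

Lemma elt_word (x : elt) : exists u, val x == word_fun u.
Proof. by have [u ->] := H_words (valP x); exists u. Qed.

Definition elt_word_of (x : elt) : seq (input Q) := xchoose (elt_word x).

Lemma elt_word_ofE x : val x = word_fun (elt_word_of x).
Proof. exact/eqP/(xchooseP (elt_word x)). Qed.

Lemma group_in_M_nonempty_word x : x \in H -> x != e ->
  exists2 z, z \in H & exists2 u, z = word_fun u & u != [::].
Proof.
move=> xH xNe; have [ux xE] := H_words xH; have [ue eE] := H_words e_H.
case: (eqVneq ux [::]) => [ux0|uxN]; last by exists x => //; exists ux.
case: (eqVneq ue [::]) => [ue0|ueN]; last by exists e => //; exists ue.
by move: xNe; rewrite xE eE ux0 ue0 eqxx.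
Qed.

(* Every element x of H is given by the nonempty word u z^-1 x, where the
   element z is given by a nonempty word u. *)
Lemma gamma_group_in_M z u : z \in H -> z = word_fun u -> u != [::] ->
  0 < #|state Q| -> 0 < #|input Q| -> Gamma K Q -> Gamma K (@Automaton elt elt elt_mul).
Proof.
move=> zH zE uN0 Qn_gt0 Qm_gt0; have [zi ziH [zziE _]] := H_inv zH.
pose w x := u ++ elt_word_of (exist _ zi ziH) ++ elt_word_of x.
apply: (gamma_transformations (tr := val) (w := w)) => // [x y|x|x].
- exact: val_inj.
- rewrite /w !word_fun_cat -!elt_word_ofE /= -zE mulTA zziE.
  by rewrite (e_unit (valP x)).1.
- by rewrite /w size_cat addn_gt0 lt0n size_eq0 uN0.
Qed.

End GroupInM.

Theorem theorem3p2 (K : ConwayCat) (Q : automaton) :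
  0 < #|state Q| -> 0 < #|input Q| ->
  Gamma K Q ->
  forall G : finGroupType, simple [set: G] -> divides_M Q G ->
    Gamma K (group_automaton G).
Proof.
move=> Qn_gt0 Qm_gt0 HQ G simpleG [H [e [phi [[H_words e_H mulT_H e_unit H_inv] phiM onto]]]].
pose phiX (x : elt H) := phi (val x).
have phiXM : {morph phiX : x y / elt_mul mulT_H x y >-> (x * y)%g}.
  by move=> x y; exact: phiM (valP x) (valP y).
have ontoX g : exists x : elt H, phiX x == g.
  by have [x xH <-] := onto g; exists (exist _ x xH).
pose s g := xchoose (ontoX g).
have sK : cancel s phiX by move=> g; exact/eqP/(xchooseP (ontoX g)).
apply: (gamma_hom_image phiXM sK).
have phi_e : phi e = 1%g.
  apply: (mulgI (phi e)); rewrite mulg1 -phiM //.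
  by rewrite (e_unit _ e_H).1.
have [g _ ntg] : exists2 g : G, g \in [set: G] & g != 1%g.
  by case/simpleP: simpleG => /trivgPn.
have sgNe : val (s g) != e.
  by apply: contraNneq ntg => sgE; rewrite -[g]sK /phiX sgE phi_e.
have [z zH [u zE uN0]] := group_in_M_nonempty_word H_words e_H (valP (s g)) sgNe.
exact: (gamma_group_in_M H_words e_unit H_inv zH zE uN0 Qn_gt0 Qm_gt0 HQ).
Qed.
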